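(* Consider $N$ advertisers, advertiser $i$ having click-through rate $c_i\in(0,1]$, abandonment probability $\gamma_i\ge 0$ with $\mu_i=c_i+\gamma_i\le 1$, and private value per click $v_i\ge 0$; index them so that $\frac{c_1v_1}{\mu_1}\ge\frac{c_2v_2}{\mu_2}\ge\dots\ge\frac{c_Nv_N}{\mu_N}$. Define bids recursively from the bottom by $b_{N+1}=0$ (so the term $\frac{b_{N+1}c_{N+1}}{\mu_{N+1}}$ is $0$) and $$b_i=\frac{\mu_i}{c_i}\Big[v_ic_i+(1-\mu_i)\frac{b_{i+1}c_{i+1}}{\mu_{i+1}}\Big],\qquad i=N,\dots,1.$$ Then, in the CE mechanism, this bid profile is an envy-free pure-strategy Nash equilibrium: no advertiser can increase its expected payoff by unilaterally changing its bid (in particular by moving to any other position). Moreover, at this equilibrium the resulting ranking is socially optimal (it maximizes the total expected value $\sum_{\text{positions }k} v_{(k)}\,c_{(k)}\prod_{l<k}(1-\mu_{(l)})$ over all orderings of the advertisers) and is also optimal for the search engine for the resulting per-click prices (it maximizes $\sum_k p_{(k)}c_{(k)}\prod_{l<k}(1-\mu_{(l)})$ over all orderings with these prices).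
   Context: Click model: users view ads top to bottom; having viewed the ad at position $k$ the user clicks it with probability $c$ of that ad, abandons with probability $\gamma$ of that ad, and otherwise moves on. Thus if ads are placed in order $(1),\dots,(N)$, the ad at position $k$ is clicked with probability $c_{(k)}\prod_{l<k}(1-\mu_{(l)})$. CE mechanism: given bids $b$, with $w=c/\mu$, ads are ranked in descending order of $wb$, and the ad at position $i$ pays per click $p_i=\frac{w_{i+1}b_{i+1}}{w_i}=\frac{b_{i+1}c_{i+1}\mu_i}{\mu_{i+1}c_i}$, where $i+1$ denotes the ad immediately below it (the bottom ad pays $0$). An advertiser's expected payoff is $(v-p)$ times its click probability; the search engine's expected profit is the sum over ads of price per click times click probability. *)

From mathcomp Require Import all_boot all_order all_algebra all_fingroup.
Set Implicit Arguments. Unset Strict Implicit. Unset Printing Implicit Defensive.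
Import Order.TTheory GRing.Theory Num.Theory.
Local Open Scope ring_scope.

(* Advertisers are 'I_N; a ranking is a permutation s : 'S_N where
   s k is the advertiser placed at position k (position 0 = top).
   c = click-through rates, mu = c + gamma, v = values, b = bids. *)

Section Click.
Variables (R : realFieldType) (N : nat).
Implicit Types (c mu v b p : 'I_N -> R) (s : 'S_N).

Definition wgt c mu (i : 'I_N) : R := c i / mu i.
Definition wbid c mu b (i : 'I_N) : R := wgt c mu i * b i.

Definition next_term c mu b (i : 'I_N) : R :=
  if (insub i.+1 : option 'I_N) is Some j then b j * c j / mu j else 0.

Definition reach mu s (k : 'I_N) : R :=
  \prod_(l : 'I_N | (l < k)%N) (1 - mu (s l)).

Definition clickp c mu s (k : 'I_N) : R := c (s k) * reach mu s k.

Definition ce_price c mu b s (k : 'I_N) : R :=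
  if omap s (insub k.+1 : option 'I_N) is Some j
  then wbid c mu b j / wgt c mu (s k) else 0.

Definition payoff c mu v b s (i : 'I_N) : R :=
  let k := (s^-1 i)%g in (v i - ce_price c mu b s k) * clickp c mu s k.

Definition is_ce_rank c mu b s : Prop :=
  forall k1 k2 : 'I_N, (k1 < k2)%N ->
    wbid c mu b (s k2) < wbid c mu b (s k1) \/
    (wbid c mu b (s k2) = wbid c mu b (s k1) /\ (s k1 < s k2)%N).

Definition upd b (i : 'I_N) (x : R) : 'I_N -> R :=
  fun j => if j == i then x else b j.

Definition welfare c mu v s : R := \sum_(k : 'I_N) v (s k) * clickp c mu s k.

Definition revenue c mu p s : R := \sum_(k : 'I_N) p (s k) * clickp c mu s k.

End Click.

From mathcomp Require Import all_boot all_order all_algebra all_fingroup.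
From mathcomp Require Import zify ring lra.
Import Order.TTheory GRing.Theory Num.Theory.

(* With a_i = c_i v_i / mu_i, the bid recursion says that the ranking scores
   W_i = w_i b_i satisfy W_i = mu_i a_i + (1 - mu_i) W_(i+1) (W_(N+1) = 0), so W_i is a
   convex combination of a_i and W_(i+1) <= a_i: the scores decrease along the sorted
   order, and every CE ranking puts the non-deviating advertisers in index order.
   Advertiser i placed just above advertiser m earns mu_i (a_i - W_m) times the
   probability of reaching the slot below it, and the identity
     (a_i - W_m) - (1 - mu_m) (a_i - W_(m+1)) = mu_m (a_i - a_m)
   shows that this gain increases in m up to m = i + 1 and decreases after: no slot
   beats the truthful one.  Welfare and revenue are sums of u_(k) c_(k) prod_(l<k)
   (1 - mu_(l)) with c u / mu decreasing in the index; swapping an adjacent inverted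
   pair never decreases such a sum, and finitely many swaps sort any ranking. *)

Set Implicit Arguments.
Unset Strict Implicit.
Unset Printing Implicit Defensive.

Section Ranks.
Variable N : nat.
Implicit Types (s : 'S_N) (i j k : 'I_N).
Local Open Scope group_scope.

Lemma card_ord_lt n : n <= N -> #|[set x : 'I_N | x < n]| = n.
Proof.
move=> le_nN; rewrite -sum1_card (eq_bigl (fun x : 'I_N => true && (x < n))).
  by rewrite (big_ord_narrow_cond le_nN) sum1_card card_ord.
by move=> x; rewrite inE.
Qed.

Lemma card_ord_ltD1 n i : n <= N -> #|[set x : 'I_N | x < n] :\ i| = n - (i < n).
Proof.
move=> le_nN; have := cardsD1 i [set x : 'I_N | x < n].
by rewrite card_ord_lt // inE; lia.
Qed.

Lemma card_preim_ord_lt (f : 'I_N -> 'I_N) n : injective f -> n <= N ->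
  #|[set j | f j < n]| = n.
Proof.
move=> f_inj le_nN; rewrite -[RHS](card_ord_lt le_nN) -[RHS](card_preimset _ f_inj).
by apply: eq_card => j; rewrite !inE.
Qed.

Lemma perm_incr_id s : (forall k k', k' = k.+1 :> nat -> s k < s k') -> s = 1.
Proof.
move=> s_incr.
have lt_sd d k k' : k' = k + d.+1 :> nat -> s k < s k'.
  elim: d k' => [|d IH] k' ek'; first by apply: s_incr; rewrite ek' addn1.
  have lt_dN : k + d.+1 < N by have := ltn_ord k'; lia.
  by apply: ltn_trans (IH (Ordinal lt_dN) erefl) (s_incr _ _ _); rewrite ek' addnS.
have lt_s k k' : k < k' -> s k < s k'.
  by move=> lt_kk'; apply: (lt_sd (k' - k.+1)); lia.
apply/permP => k; apply/val_inj; rewrite perm1 /=.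
rewrite -[LHS](card_preim_ord_lt (@perm_inj _ s) (ltnW (ltn_ord (s k)))).
rewrite -[RHS](card_ord_lt (ltnW (ltn_ord k))); apply: eq_card => j; rewrite !inE.
case: (ltngtP j k) => [/lt_s ->|/lt_s|/val_inj ->] //.
  by move=> lt_sksj; apply/negbTE; rewrite -leqNgt ltnW.
by rewrite ltnn.
Qed.

Lemma perm_adjacent_descent s : s != 1 ->
  exists k k', k' = k.+1 :> nat /\ s k' < s k.
Proof.
move=> s_ne1.
have [/existsP[k /existsP[k' /andP[/eqP ek' desc]]]|/existsPn no_desc] :=
  boolP [exists k : 'I_N, exists k' : 'I_N, (k' == k.+1 :> nat) && (s k' < s k)].
  by exists k, k'.
case/eqP: s_ne1; apply: perm_incr_id => k k' ek'.
have /existsPn/(_ k') := no_desc k; rewrite ek' eqxx /= -leqNgt leq_eqVlt.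
by case/orP => [/eqP/val_inj/perm_inj e|//]; move: ek'; rewrite e; lia.
Qed.

Definition keeps_order_except i s :=
  forall j1 j2, j1 != i -> j2 != i -> (s^-1 j1 < s^-1 j2) = (j1 < j2).

Lemma keeps_order_except_id i : keeps_order_except i 1.
Proof. by move=> j1 j2 _ _; rewrite invg1 !perm1. Qed.

(* The position of [j] counts the other advertisers before it, and [i] if [i] is before it. *)
Lemma rank_keep_order i s j : keeps_order_except i s -> j != i ->
  s^-1 j = j - (i < j) + (s^-1 i < s^-1 j) :> nat.
Proof.
move=> keep ji.
rewrite -{1}[nat_of_ord _](card_preim_ord_lt (@perm_inj _ s^-1) (ltnW (ltn_ord (s^-1 j)))).
rewrite (cardsD1 i) inE addnC; congr (_ + _).
rewrite -card_ord_ltD1 ?(ltnW (ltn_ord j)) //; apply: eq_card => x; rewrite !inE.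
by case: (eqVneq x i) => //= xi; rewrite keep.
Qed.

Lemma keep_order_before i s j : keeps_order_except i s -> j != i ->
  (s^-1 j < s^-1 i) = (j < s^-1 i + (i <= s^-1 i)).
Proof.
move=> keep ji; have := rank_keep_order keep ji; have := ltn_ord i.
by move: ji; rewrite -val_eqE /=; lia.
Qed.

Lemma keep_order_next i s (p : 'I_N) : keeps_order_except i s ->
  p = (s^-1 i).+1 :> nat -> s p = s^-1 i + (i <= s^-1 i) :> nat.
Proof.
move=> keep ep; have spi : s p != i.
  by apply/eqP => spi; move: ep; rewrite -spi permK; lia.
have := rank_keep_order keep spi; rewrite permK ep.
by move: spi; rewrite -val_eqE /=; lia.
Qed.

End Ranks.

Lemma bigD2 (T : Type) (idx : T) (op : Monoid.com_law idx) (I : finType) (k k' : I)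
    (F : I -> T) : k != k' ->
  \big[op/idx]_i F i = op (op (F k) (F k')) (\big[op/idx]_(i | (i != k) && (i != k')) F i).
Proof.
by move=> kk'; rewrite (bigD1 k) // (bigD1 k') 1?eq_sym //= Monoid.mulmA.
Qed.

Local Open Scope ring_scope.

Section Exchange.
Variables (R : realFieldType) (N : nat).
Implicit Types (mu : 'I_N -> R) (s : 'S_N).

Lemma reach_succ mu s (k k' : 'I_N) : k' = k.+1 :> nat ->
  reach mu s k' = reach mu s k * (1 - mu (s k)).
Proof.
move=> ek'; rewrite /reach (bigD1 k) /=; last by rewrite ek'.
rewrite mulrC; congr (_ * _); apply: eq_bigl => l.
by rewrite ek' ltnS -val_eqE /= [(l < k)%N]ltn_neqAle andbC.
Qed.

Lemma reach_tperm mu s (k k' x : 'I_N) : k' = k.+1 :> nat -> x != k' ->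
  reach mu (tperm k k' * s)%g x = reach mu s x.
Proof.
move=> ek' xk'; rewrite /reach (reindex_inj (@perm_inj _ (tperm k k'))) /=.
apply: eq_big => [l|l _]; last by rewrite permM tpermK.
move: xk'; rewrite -val_eqE /= ek' => xk'.
by case: tpermP => [->|->|//]; rewrite ?ek'; lia.
Qed.

Definition rank_weight s : nat := (\sum_(k : 'I_N) k * (N - s k))%N.

Lemma rank_weight_tperm s (k k' : 'I_N) : k' = k.+1 :> nat -> (s k' < s k)%N ->
  (rank_weight (tperm k k' * s)%g < rank_weight s)%N.
Proof.
move=> ek' desc; have kk' : k != k' by rewrite -val_eqE /= ek' neq_ltn ltnSn.
rewrite /rank_weight !(bigD2 _ _ kk') /=.
rewrite !permM tpermL tpermR (eq_bigr (fun x : 'I_N => x * (N - s x))%N); last first.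
  by move=> x /andP[xk xk']; rewrite permM tpermD // eq_sym.
by have := ltn_ord (s k); rewrite ek' !mulSn; lia.
Qed.

Variables (c mu u t : 'I_N -> R).
Hypothesis mu01 : forall j, 0 <= mu j <= 1.
Hypothesis cuE : forall j, c j * u j = mu j * t j.
Hypothesis t_noninc : forall i j : 'I_N, (i <= j)%N -> t j <= t i.

(* The swap adds [reach mu s k * mu (s k) * mu (s k') * (t (s k') - t (s k))]. *)
Lemma welfare_tperm_ge s (k k' : 'I_N) : k' = k.+1 :> nat -> (s k' < s k)%N ->
  welfare c mu u s <= welfare c mu u (tperm k k' * s)%g.
Proof.
move=> ek' desc; have kk' : k != k' by rewrite -val_eqE /= ek' neq_ltn ltnSn.
rewrite /welfare !(bigD2 _ _ kk') /=.
rewrite [X in _ <= _ + X](eq_bigr (fun x => u (s x) * clickp c mu s x)); last first.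
  by move=> x /andP[xk xk']; rewrite /clickp reach_tperm // permM tpermD // eq_sym.
rewrite lerD2r /clickp !permM tpermL tpermR !(reach_succ _ _ ek').
rewrite reach_tperm ?permM ?tpermL //.
have r_ge0 : 0 <= reach mu s k.
  by apply: prodr_ge0 => l _; have /andP[_] := mu01 (s l); rewrite subr_ge0.
have /andP[mux_ge0 _] := mu01 (s k); have /andP[muy_ge0 _] := mu01 (s k').
have cux := cuE (s k); have cuy := cuE (s k'); have txy := t_noninc (ltnW desc).
set r := reach mu s k; set x := s k; set y := s k' in cux cuy txy *; rewrite -subr_ge0.
have -> : u y * (c y * r) + u x * (c x * (r * (1 - mu y))) -
    (u x * (c x * r) + u y * (c y * (r * (1 - mu x)))) =
    r * (mu x * (c y * u y) - mu y * (c x * u x)) by ring.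
have -> : mu x * (c y * u y) - mu y * (c x * u x) = mu x * mu y * (t y - t x).
  by rewrite cux cuy; ring.
by rewrite !mulr_ge0 // subr_ge0.
Qed.

Lemma welfare_le_id s : welfare c mu u s <= welfare c mu u 1%g.
Proof.
move: {2}(rank_weight s) (erefl (rank_weight s)) => n; elim/ltn_ind: n s => n IH s wt_s.
have [-> //|/perm_adjacent_descent[k [k' [ek' desc]]]] := eqVneq s 1%g.
apply: le_trans (welfare_tperm_ge ek' desc) (IH _ _ _ erefl).
by rewrite -wt_s rank_weight_tperm.
Qed.

End Exchange.

Lemma unimodal_le (d : Order.disp_t) (T : porderType d) (f : nat -> T) (p q : nat) :
    (forall n, (n < p)%N -> (f n <= f n.+1)%O) ->
    (forall n, (p <= n < q)%N -> (f n.+1 <= f n)%O) ->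
  forall n, (n <= q)%N -> (f n <= f p)%O.
Proof.
move=> f_up f_down n le_nq; case: (leqP n p) => [le_np|lt_pn].
  apply: (@homo_leq_in _ [pred m | m <= p]%N f _ _ (@le_trans _ _) _ _ n p) => //.
  - by move=> i j iD jD k; rewrite !inE in iD jD *; lia.
  - by move=> m _ /[!inE] lt_mp; apply: f_up.
  - by rewrite inE.
have ge_trans (y x z : T) : (y <= x -> z <= y -> z <= x)%O.
  by move=> yx zy; apply: le_trans zy yx.
apply: (@homo_leq_in _ [pred m | p <= m <= q]%N f (fun x y => y <= x)%O _ ge_trans _ _ p n) => //.
- by move=> i j iD jD k; rewrite !inE in iD jD *; lia.
- by move=> m /[!inE] /andP[le_pm _] /andP[_ lt_mq]; apply: f_down; rewrite le_pm.
- by rewrite inE; lia.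
- by rewrite inE; lia.
- exact: ltnW.
Qed.

Section Mechanism.
Variables (R : realFieldType) (N : nat) (c mu v : 'I_N -> R).

Lemma payoff_upd b (i : 'I_N) (x : R) (s : 'S_N) :
  payoff c mu v (upd b i x) s i = payoff c mu v b s i.
Proof.
rewrite /payoff /ce_price; case: insubP => //= p _ ep.
have spi : s p != i by apply/eqP => spi; move: ep; rewrite -spi permK; lia.
by rewrite /wbid /upd (negbTE spi).
Qed.

Lemma ce_rank_keeps_order b (i : 'I_N) (s : 'S_N) :
    (forall j1 j2 : 'I_N, j1 != i -> j2 != i -> (j1 <= j2)%N ->
       wbid c mu b j2 <= wbid c mu b j1) ->
  is_ce_rank c mu b s -> keeps_order_except i s.
Proof.
move=> wbid_noninc ce_s.
have before j1 j2 : j1 != i -> j2 != i ->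
    ((s^-1)%g j1 < (s^-1)%g j2)%N -> (j1 < j2)%N.
  move=> j1i j2i /ce_s; rewrite !permKV; case: (ltnP j1 j2) => // le21.
  have le_w := wbid_noninc _ _ j2i j1i le21.
  by case=> [/lt_le_trans/(_ le_w)|[_ //]]; rewrite ltxx.
move=> j1 j2 j1i j2i; case: (ltngtP ((s^-1)%g j1) ((s^-1)%g j2)).
- by move/before ->.
- by move/before => /(_ j2i j1i) lt21; apply/esym/negbTE; rewrite -leqNgt ltnW.
- by move/val_inj/perm_inj ->; rewrite ltnn.
Qed.

End Mechanism.

Section Equilibrium.
Variables (R : realFieldType) (N : nat) (c mu v b : 'I_N -> R).
Implicit Types (i j : 'I_N) (s : 'S_N).
Hypothesis c_gt0 : forall j, 0 < c j.
Hypothesis mu_gt0 : forall j, 0 < mu j.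
Hypothesis mu_le1 : forall j, mu j <= 1.
Hypothesis v_ge0 : forall j, 0 <= v j.

Definition score j : R := c j * v j / mu j.

Hypothesis score_noninc : forall i j : 'I_N, (i <= j)%N -> score j <= score i.

Definition wbid_at (n : nat) : R :=
  if (insub n : option 'I_N) is Some j then wbid c mu b j else 0.

Hypothesis b_rec : forall i,
  b i = mu i / c i * (v i * c i + (1 - mu i) * next_term c mu b i).

Lemma wbid_atE j : wbid_at j = wbid c mu b j.
Proof. by rewrite /wbid_at valK. Qed.

Lemma wbid_at_out n : (N <= n)%N -> wbid_at n = 0.
Proof. by move=> le_Nn; rewrite /wbid_at insubF // ltnNge le_Nn. Qed.

Lemma wbid_rec j : wbid c mu b j = mu j * score j + (1 - mu j) * wbid_at j.+1.
Proof.
have [cj0 muj0] : c j != 0 /\ mu j != 0 by rewrite !gt_eqF.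
have next_termE : next_term c mu b j = wbid_at j.+1.
  by rewrite /next_term /wbid_at; case: insub => // j'; rewrite /wbid /wgt; ring.
by rewrite {1}/wbid /wgt b_rec next_termE /score; field; rewrite cj0 muj0.
Qed.

Lemma score_ge0 j : 0 <= score j.
Proof. by rewrite /score divr_ge0 ?mulr_ge0 // ltW. Qed.

Lemma wbid_at_le_score j : wbid_at j.+1 <= score j.
Proof.
have [n] := ubnP (N - j); elim: n j => // n IH j lt_jn.
rewrite /wbid_at; case: insubP => [j' _ ej'|_]; last exact: score_ge0.
have le_jj' : (j <= j')%N by rewrite ej'.
have := IH j' ltac:(rewrite ej'; have := ltn_ord j'; lia).
have := score_noninc le_jj'; have := mu_le1 j'; rewrite wbid_rec; nra.
Qed.

Lemma wbid_at_noninc m n : (m <= n)%N -> wbid_at n <= wbid_at m.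
Proof.
apply: (@homo_leq _ wbid_at (fun x y => y <= x)) => [x|y x z yx zy|k] //=.
  exact: le_trans zy yx.
case: (ltnP k N) => [lt_kN|le_Nk]; last by rewrite !wbid_at_out // (leq_trans le_Nk).
have := wbid_at_le_score (Ordinal lt_kN); have := mu_gt0 (Ordinal lt_kN).
rewrite [wbid_at k](_ : _ = wbid_at (Ordinal lt_kN)) // wbid_atE wbid_rec /=; nra.
Qed.

Lemma wbid_noninc j1 j2 : (j1 <= j2)%N -> wbid c mu b j2 <= wbid c mu b j1.
Proof. by rewrite -!wbid_atE; apply: wbid_at_noninc. Qed.

(* [reach_without i m] is the probability of reaching the ad below advertiser [i] when [i]
   is placed immediately above advertiser [m] (or at the bottom when [m = N]). *)
Definition reach_without i (m : nat) : R :=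
  \prod_(j : 'I_N | (j < m)%N && (j != i)) (1 - mu j).

Definition dev_gain i (m : nat) : R := (score i - wbid_at m) * reach_without i m.

Lemma reach_without_ge0 i m : 0 <= reach_without i m.
Proof. by apply: prodr_ge0 => j _; rewrite subr_ge0. Qed.

Lemma reach_without_succ i j : j != i ->
  reach_without i j.+1 = reach_without i j * (1 - mu j).
Proof.
move=> ji; rewrite /reach_without (bigD1 j) /=; last by rewrite ltnSn ji.
rewrite mulrC; congr (_ * _); apply: eq_bigl => l.
case: (eqVneq l j) => [->|lj]; first by rewrite ltnn !andbF.
by rewrite andbT ltnS leq_eqVlt val_eqE (negbTE lj).
Qed.

Lemma reach_without_self i : reach_without i i.+1 = reach_without i i.
Proof.
apply: eq_bigl => l; case: (eqVneq l i) => [->|li]; first by rewrite !andbF.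
by rewrite ltnS leq_eqVlt val_eqE (negbTE li).
Qed.

Lemma dev_gain_up i j : (j <= i)%N -> dev_gain i j <= dev_gain i j.+1.
Proof.
rewrite leq_eqVlt => /orP[/eqP/val_inj ->|lt_ji].
  rewrite /dev_gain reach_without_self ler_wpM2r ?reach_without_ge0 // lerB //.
  exact: wbid_at_noninc.
have ji : j != i by rewrite -val_eqE neq_ltn lt_ji.
rewrite /dev_gain reach_without_succ // mulrA [X in _ <= X]mulrAC.
rewrite ler_wpM2r ?reach_without_ge0 // wbid_atE wbid_rec.
by have := score_noninc (ltnW lt_ji); have := mu_gt0 j; nra.
Qed.

Lemma dev_gain_down i j : (i < j)%N -> dev_gain i j.+1 <= dev_gain i j.
Proof.
move=> lt_ij; have ji : j != i by rewrite -val_eqE neq_ltn lt_ij orbT.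
rewrite /dev_gain reach_without_succ // mulrA [X in X <= _]mulrAC.
rewrite ler_wpM2r ?reach_without_ge0 // wbid_atE wbid_rec.
by have := score_noninc (ltnW lt_ij); have := mu_gt0 j; nra.
Qed.

Lemma dev_gain_le i m : (m <= N)%N -> dev_gain i m <= dev_gain i i.+1.
Proof.
apply: unimodal_le => n; last first.
  by case/andP => lt_in lt_nN; apply: (dev_gain_down (j := Ordinal lt_nN)).
rewrite ltnS => le_ni; have lt_nN := leq_ltn_trans le_ni (ltn_ord i).
exact: (dev_gain_up (j := Ordinal lt_nN)).
Qed.

Lemma reach_keep_order i s : keeps_order_except i s ->
  reach mu s ((s^-1)%g i) = reach_without i ((s^-1)%g i + (i <= (s^-1)%g i)).
Proof.
move=> keep; rewrite /reach (reindex_inj (@perm_inj _ (s^-1)%g)) /=.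
apply: eq_big => [j|j _]; last by rewrite permKV.
case: (eqVneq j i) => [->|ji]; first by rewrite ltnn andbF.
by rewrite andbT keep_order_before.
Qed.

Lemma price_keep_order i s : keeps_order_except i s ->
  c i * ce_price c mu b s ((s^-1)%g i) =
  mu i * wbid_at ((s^-1)%g i + (i <= (s^-1)%g i)).
Proof.
move=> keep; rewrite /ce_price; case: insubP => [p _ ep|last] /=.
  rewrite -(keep_order_next keep ep) wbid_atE permKV /wgt.
  by field; rewrite !gt_eqF.
by rewrite wbid_at_out ?mulr0 //; move: last; have := ltn_ord i; lia.
Qed.

Lemma payoff_keep_order i s : keeps_order_except i s ->
  payoff c mu v b s i = mu i * dev_gain i ((s^-1)%g i + (i <= (s^-1)%g i)).
Proof.
move=> keep; have price := price_keep_order keep.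
rewrite /payoff /clickp permKV reach_keep_order // /dev_gain /score mulrA mulrBl.
by rewrite [ce_price _ _ _ _ _ * _]mulrC price; field; rewrite gt_eqF.
Qed.

Lemma payoff_id i : payoff c mu v b 1%g i = mu i * dev_gain i i.+1.
Proof.
by rewrite (payoff_keep_order (keeps_order_except_id (i := i))) invg1 perm1 leqnn addn1.
Qed.

Lemma ce_price_id j : c j * ce_price c mu b 1%g j = mu j * wbid_at j.+1.
Proof.
have := price_keep_order (keeps_order_except_id (i := j)).
by rewrite invg1 perm1 leqnn addn1.
Qed.

Lemma ce_rank_id : is_ce_rank c mu b 1%g.
Proof.
move=> k1 k2 lt12; rewrite !perm1.
have := wbid_noninc (ltnW lt12); rewrite le_eqVlt => /orP[/eqP eq21|lt21].
  by right.
by left.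
Qed.

Lemma envy_free i s : keeps_order_except i s ->
  payoff c mu v b s i <= payoff c mu v b 1%g i.
Proof.
move=> keep; rewrite payoff_keep_order // payoff_id ler_pM2l // dev_gain_le //.
by have := ltn_ord ((s^-1)%g i); lia.
Qed.

Lemma nash i x s : is_ce_rank c mu (upd b i x) s ->
  payoff c mu v (upd b i x) s i <= payoff c mu v b 1%g i.
Proof.
move=> ce_s; rewrite payoff_upd; apply: envy_free; apply: ce_rank_keeps_order ce_s.
by move=> j1 j2 j1i j2i le12; rewrite /wbid /upd !ifN // wbid_noninc.
Qed.

Lemma welfare_opt s : welfare c mu v s <= welfare c mu v 1%g.
Proof.
apply: (welfare_le_id (t := score)) => [j|j|i j]; last exact: score_noninc.
- by rewrite ltW ?mu_le1 ?mu_gt0.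
- by rewrite /score; field; rewrite gt_eqF.
Qed.

Lemma revenue_opt s :
  revenue c mu (ce_price c mu b 1%g) s <= revenue c mu (ce_price c mu b 1%g) 1%g.
Proof.
apply: (welfare_le_id (t := fun j => wbid_at j.+1)) => [j|j|i j le_ij].
- by rewrite ltW ?mu_le1 ?mu_gt0.
- exact: ce_price_id.
- exact: wbid_at_noninc.
Qed.

End Equilibrium.

Theorem theorem3 (R : realFieldType) (N : nat) (c g v b : 'I_N -> R)
  (hc : forall i, 0 < c i /\ c i <= 1)
  (hg : forall i, 0 <= g i)
  (hmu : forall i, c i + g i <= 1)
  (hv : forall i, 0 <= v i)
  (hsort : forall i j : 'I_N, (i <= j)%N ->
     c j * v j / (c j + g j) <= c i * v i / (c i + g i))
  (hb : forall i, b i = (c i + g i) / c i *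
     (v i * c i + (1 - (c i + g i)) * next_term c (fun j => c j + g j) b i)) :
  let mu := fun j => c j + g j in
  is_ce_rank c mu b 1%g /\
  (forall (i : 'I_N) (x : R) (s : 'S_N), 0 <= x ->
     is_ce_rank c mu (upd b i x) s ->
     payoff c mu v (upd b i x) s i <= payoff c mu v b 1%g i) /\
  (forall (i : 'I_N) (s : 'S_N),
     (forall j1 j2 : 'I_N, j1 != i -> j2 != i ->
        ((s^-1 j1)%g < (s^-1 j2)%g)%N = (j1 < j2)%N) ->
     payoff c mu v b s i <= payoff c mu v b 1%g i) /\
  (forall s : 'S_N, welfare c mu v s <= welfare c mu v 1%g) /\
  (forall s : 'S_N,
     revenue c mu (fun j => ce_price c mu b 1%g j) s
       <= revenue c mu (fun j => ce_price c mu b 1%g j) 1%g).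
Proof.
move=> mu.
have c_gt0 j : 0 < c j by case: (hc j).
have mu_gt0 j : 0 < mu j by have := hg j; have := c_gt0 j; rewrite /mu; lra.
split; first exact: ce_rank_id c_gt0 mu_gt0 hmu hv hsort hb.
split; first by move=> i x s _ ce_s; exact: (nash c_gt0 mu_gt0 hmu hv hsort hb ce_s).
split; first by move=> i s keep; exact: (envy_free c_gt0 mu_gt0 hmu hv hsort hb keep).
split; first exact: welfare_opt mu_gt0 hmu hsort.
exact: revenue_opt c_gt0 mu_gt0 hmu hv hsort hb.
Qed.
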